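(* For $n\ge3$ let $\mathcal{K}_n(\lambda)=\det(\lambda I_n-M_n)$, where $M_n$ is the $n\times n$ matrix with $(M_n)_{j,i}=1$ if $i\ge j-1$ or $(j,i)=(n,n-2)$, and $(M_n)_{j,i}=0$ otherwise. Then $\mathcal{K}_3(\lambda)=\lambda^3-3\lambda^2$, $\mathcal{K}_4(\lambda)=\lambda^4-4\lambda^3+2\lambda^2$, and $$\mathcal{K}_n(\lambda)=\lambda\,\mathcal{K}_{n-1}(\lambda)-\lambda\,\mathcal{K}_{n-2}(\lambda)\qquad(n\ge5).$$ *)

From mathcomp Require Import all_boot all_order all_algebra.
Set Implicit Arguments. Unset Strict Implicit. Unset Printing Implicit Defensive.
Import GRing.Theory.
Local Open Scope ring_scope.

(* M_n with 0-based indices: paper entry (j,i) (1-based) is entry (j-1,i-1).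
   (M_n)_{j,i} = 1 iff i >= j-1 (i.e. i0 + 1 >= j0) or (j,i) = (n,n-2)
   (i.e. j0 = n-1, i0 = n-3). *)
Definition Mmat (R : nzRingType) (n : nat) : 'M[R]_n :=
  \matrix_(j < n, i < n)
    (if ((j <= i.+1)%N || ((j == n.-1 :> nat) && (i == (n - 3)%N :> nat)))
     then 1 else 0).

Definition Kpoly (R : comNzRingType) (n : nat) : {poly R} :=
  char_poly (Mmat R n).

From mathcomp Require Import all_boot all_order all_algebra.
From mathcomp Require Import zify ring.
Set Implicit Arguments.
Unset Strict Implicit.
Unset Printing Implicit Defensive.
Import GRing.Theory.
Local Open Scope ring_scope.

(* Expand det(X - M_n) along its first column. For n >= 4 the exceptional
   entry (n, n-2) lies outside that column, so only the two top entries
   X - 1 and -1 survive. Deleting the first row and column of X - M_n gives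
   X - M_(n-1); deleting the second row instead gives the same matrix except
   for an extra -X in its top-left corner, so by linearity in the first row
   its determinant is K_(n-1) - X K_(n-2). Altogether
   K_n = (X - 1) K_(n-1) + K_(n-1) - X K_(n-2). *)

Section DetExpansion.
Variables (R : comNzRingType) (n : nat).

Lemma det_subr_delta00 (B : 'M[R]_n.+1) (c : R) :
  \det (B - c *: delta_mx 0 0) = \det B - c * \det (row' 0 (col' 0 B)).
Proof.
have cofE j : cofactor (B - c *: delta_mx 0 0) 0 j = cofactor B 0 j.
  congr (_ * \det _); apply/matrixP => i k.
  by rewrite !mxE eq_sym (negbTE (neq_lift 0 i)) mulr0 subr0.
rewrite (expand_det_row _ 0) [\det B](expand_det_row _ 0).
under eq_bigr do rewrite cofE !mxE mulrBl.
rewrite sumrB; congr (_ - _).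
rewrite (bigD1 0) //= big1 => [|j /negbTE j0]; last by rewrite j0 mulr0 mul0r.
by rewrite mulr1 addr0 /cofactor expr0 mul1r.
Qed.

Lemma expand_det_col0_top2 (A : 'M[R]_n.+2) :
  (forall i : 'I_n, A (lift 0 (lift 0 i)) 0 = 0) ->
  \det A = A 0 0 * \det (row' 0 (col' 0 A))
           - A (lift 0 0) 0 * \det (row' (lift 0 0) (col' 0 A)).
Proof.
move=> A0; rewrite (expand_det_col _ 0) !big_ord_recl big1 ?addr0.
  by rewrite /cofactor /= !expr0 expr1 !mul1r mulN1r mulrN.
by move=> i _; rewrite A0 mul0r.
Qed.

End DetExpansion.

Lemma char_poly_mx_Mmat_drop0 (R : comNzRingType) (n : nat) :
  row' 0 (col' 0 (char_poly_mx (Mmat R n.+1))) = char_poly_mx (Mmat R n).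
Proof.
apply/matrixP => -[i Hi] [j Hj]; rewrite !mxE /= (inj_eq (@lift_inj _ 0)) /bump /=.
congr (_ - _%:P); congr (if _ then _ else _); apply/idP/idP; lia.
Qed.

Section Kpoly.
Variable R : comNzRingType.

Lemma Kpoly_rec (n : nat) : (2 <= n)%N ->
  Kpoly R n.+2 = 'X * Kpoly R n.+1 - 'X * Kpoly R n.
Proof.
case: n => // n n_ge1; set A := char_poly_mx (Mmat R n.+3).
have col0E (i : 'I_n.+1) : A (lift 0 (lift 0 i)) 0 = 0.
  by rewrite !mxE !subSS subn0 [(0 == n)%N]eq_sym (negbTE (lt0n_neq0 n_ge1)) andbF subr0.
have minor10E : row' (lift 0 0) (col' 0 A) = row' 0 (col' 0 A) - 'X *: delta_mx 0 0.
  apply/matrixP => -[[|i] Hi] [j Hj]; rewrite !mxE -!val_eqE /= /bump /=.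
    by case: j Hj => [|j] _; rewrite /= ?mulr1n ?mulr0n; ring.
  by rewrite mulr0 subr0.
rewrite /Kpoly /char_poly -/A (expand_det_col0_top2 col0E) minor10E det_subr_delta00.
rewrite /A !char_poly_mx_Mmat_drop0 !mxE /= mulr1n mulr0n polyC1; ring.
Qed.

Lemma Kpoly2 : Kpoly R 2 = 'X^2 - 2%:R *: 'X.
Proof.
rewrite /Kpoly /char_poly (expand_det_row _ 0) !big_ord_recl big_ord0 /cofactor.
rewrite !det_mx11 !mxE /= /bump /= !mulr1n !mulr0n polyC1 -!mul_polyC polyC_natr.
ring.
Qed.

Lemma Kpoly3 : Kpoly R 3 = 'X^3 - 3%:R *: 'X^2.
Proof.
rewrite /Kpoly /char_poly (expand_det_row _ 0) !big_ord_recl big_ord0 /cofactor.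
rewrite !(expand_det_row _ 0) !big_ord_recl !big_ord0 /cofactor.
rewrite !det_mx11 !mxE /= /bump /= !mulr1n !mulr0n polyC1 -!mul_polyC polyC_natr.
ring.
Qed.

End Kpoly.

Theorem lemma2 (R : comNzRingType) :
  [/\ Kpoly R 3 = 'X^3 - 3%:R *: 'X^2,
      Kpoly R 4 = 'X^4 - 4%:R *: 'X^3 + 2%:R *: 'X^2
    & forall n : nat, (5 <= n)%N ->
        Kpoly R n = 'X * Kpoly R n.-1 - 'X * Kpoly R n.-2].
Proof.
split; first exact: Kpoly3.
- rewrite Kpoly_rec // Kpoly3 Kpoly2 -!mul_polyC !polyC_natr; ring.
- by case=> [|[|n]] // n_ge5; rewrite (Kpoly_rec _ (ltnW n_ge5)).
Qed.
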